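(* For each $y\in\mathbb{Z}_p$, the map $S^y:C(\mathbb{Z}_p,\mathbb{C}_p)\to C(\mathbb{Z}_p,\mathbb{C}_p)$ is an isometric automorphism of the $\mathbb{C}_p$-Banach space $C(\mathbb{Z}_p,\mathbb{C}_p)$ (i.e. $\|S^y(\phi)\|=\|\phi\|$ for all $\phi$), with inverse $S^{-y}$.
   Context: Fix a prime $p$. $\mathbb{C}_p$ denotes the completion of an algebraic closure of $\mathbb{Q}_p$, with absolute value $|\cdot|$ normalized by $|p|=1/p$. $C(\mathbb{Z}_p,\mathbb{C}_p)$ is the $\mathbb{C}_p$-Banach space of continuous functions $\mathbb{Z}_p\to\mathbb{C}_p$ with the sup-norm $\|\cdot\|$. For $n\in\mathbb{Z}_{\ge0}$ and $x\in\mathbb{Z}_p$, $\binom{x}{n}=x(x-1)\cdots(x-n+1)/n!$. For $y\in\mathbb{Z}_p$ and $\phi\in C(\mathbb{Z}_p,\mathbb{C}_p)$ define $S^y(\phi)\in C(\mathbb{Z}_p,\mathbb{C}_p)$ by $S^y(\phi)(x)=\sum_{k\ge0}(-1)^k k!\binom yk\binom xk\phi(x-k)$ (the series converges uniformly in $(x,y)$). *)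

From HB Require Import structures.
From mathcomp Require Import all_boot all_order all_algebra.
From mathcomp Require Import boolp classical_sets reals.
From Stdlib Require Import ClassicalEpsilon.
Set Implicit Arguments. Unset Strict Implicit. Unset Printing Implicit Defensive.
Import Order.TTheory GRing.Theory Num.Theory.
Local Open Scope ring_scope.
Local Open Scope classical_set_scope.

Section PadicDefs.
Variables (R : realType) (K : fieldType) (abs : K -> R).

Definition convK (u : nat -> K) (l : K) : Prop :=
  forall e : R, 0 < e -> exists N : nat, forall n, (N <= n)%N -> abs (u n - l) < e.

Definition cauchyK (u : nat -> K) : Prop :=
  forall e : R, 0 < e -> exists N : nat, forall m n, (N <= m)%N -> (N <= n)%N ->
    abs (u m - u n) < e.

Record padic_abs (p : nat) : Prop := PadicAbs {
  abs_ge0 : forall x, 0 <= abs x;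
  abs_eq0 : forall x, abs x = 0 <-> x = 0;
  absM : forall x y, abs (x * y) = abs x * abs y;
  abs_ultra : forall x y, abs (x + y) <= Num.max (abs x) (abs y);
  abs_p : abs (p%:R) = (p%:R)^-1;
  abs_complete : forall u, cauchyK u -> exists l, convK u l }.

(* Z_p, realized inside K as the closure of the image of Z *)
Definition Zp_set : set K :=
  [set x | forall e : R, 0 < e -> exists z : int, abs (x - z%:~R) < e].

(* continuity on Z_p of a function (only its values on Z_p matter) *)
Definition cont_Zp (f : K -> K) : Prop :=
  forall x, Zp_set x -> forall e : R, 0 < e -> exists2 d : R, 0 < d &
    forall x', Zp_set x' -> abs (x' - x) < d -> abs (f x' - f x) < e.

Definition supnorm (f : K -> K) : R := sup [set abs (f x) | x in Zp_set].

Definition binomK (x : K) (k : nat) : K :=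
  (\prod_(i < k) (x - i%:R)) / (k`!)%:R.

Definition S_term (y : K) (phi : K -> K) (x : K) (k : nat) : K :=
  (-1) ^+ k * (k`!)%:R * binomK y k * binomK x k * phi (x - k%:R).

Definition S_partial (y : K) (phi : K -> K) (x : K) (n : nat) : K :=
  \sum_(k < n) S_term y phi x k.

Definition S_op (y : K) (phi : K -> K) (x : K) : K :=
  epsilon (inhabits 0) (convK (S_partial y phi x)).

End PadicDefs.

From HB Require Import structures.
From mathcomp Require Import all_boot all_order all_algebra.
From mathcomp Require Import boolp classical_sets reals.
From mathcomp Require Import ring lra zify.
From Stdlib Require Import ClassicalEpsilon Classical.
Set Implicit Arguments. Unset Strict Implicit. Unset Printing Implicit Defensive.
Import Order.TTheory GRing.Theory Num.Theory.
Local Open Scope ring_scope.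

(* The coefficient (-1)^k k! binom(y,k) binom(x,k) of the series has absolute value at most
   |k!|, and |k!| -> 0 because |(pm)!| <= |p|^m.  Since a continuous phi is bounded on the compact
   Z_p, the series converges uniformly, so S^y phi is continuous and ||S^y phi|| <= ||phi||.
   Expanding S^-y (S^y phi) as a double series, the n-th diagonal is a common factor times
   sum_k binom(-y,k) binom(y,n-k) = binom(0,n) by Vandermonde's identity, so only phi survives;
   thus S^-y is inverse to S^y, which also gives ||phi|| <= ||S^y phi||. *)

Section Padic.
Variables (p : nat) (R : realType) (K : fieldType) (abs : K -> R).
Hypothesis Hp : prime p.
Hypothesis Ha : padic_abs abs p.
Implicit Types (x y z : K) (phi psi : K -> K) (M e : R).

Let abs_nneg := abs_ge0 Ha.
Let abs_mul := absM Ha.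
Local Hint Resolve abs_nneg : core.

Lemma abs0 : abs 0 = 0.
Proof. exact/(abs_eq0 Ha). Qed.

Lemma abs_gt0 x : x != 0 -> 0 < abs x.
Proof. by move=> /eqP nx; rewrite lt_def abs_nneg andbT; apply/eqP => /(abs_eq0 Ha). Qed.

Lemma abs1 : abs 1 = 1.
Proof.
have := abs_mul 1 1; rewrite mulr1 => h.
by apply: (mulIf (lt0r_neq0 (abs_gt0 (oner_neq0 K)))); rewrite mul1r.
Qed.

Lemma absN x : abs (- x) = abs x.
Proof.
have hN1 : abs (-1) = 1.
  have := abs_mul (-1) (-1); rewrite mulrNN mulr1 abs1 => h.
  by have := abs_nneg (-1); nra.
by rewrite -mulN1r abs_mul hN1 mul1r.
Qed.

Lemma abs_distC x y : abs (x - y) = abs (y - x).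
Proof. by rewrite -absN opprB. Qed.

Lemma abs_add_le x y e : abs x <= e -> abs y <= e -> abs (x + y) <= e.
Proof. by move=> hx hy; apply: le_trans (abs_ultra Ha x y) _; rewrite ge_max hx hy. Qed.

Lemma abs_add_lt x y e : abs x < e -> abs y < e -> abs (x + y) < e.
Proof. by move=> hx hy; apply: le_lt_trans (abs_ultra Ha x y) _; rewrite gt_max hx hy. Qed.

Lemma abs_dist_le x y z e : abs (x - y) <= e -> abs (y - z) <= e -> abs (x - z) <= e.
Proof. by move=> h1 h2; rewrite -[x - z](subrKA y); apply: abs_add_le. Qed.

Lemma abs_dist_lt x y z e : abs (x - y) < e -> abs (y - z) < e -> abs (x - z) < e.
Proof. by move=> h1 h2; rewrite -[x - z](subrKA y); apply: abs_add_lt. Qed.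

Lemma abs_sum_le (I : Type) (r : seq I) (P : pred I) (F : I -> K) e :
  0 <= e -> (forall i, P i -> abs (F i) <= e) -> abs (\sum_(i <- r | P i) F i) <= e.
Proof.
move=> e0 h; apply: (big_ind (fun u => abs u <= e)) => //; first by rewrite abs0.
by move=> u v; exact: abs_add_le.
Qed.

Lemma abs_sum_lt (I : Type) (r : seq I) (P : pred I) (F : I -> K) e :
  0 < e -> (forall i, P i -> abs (F i) < e) -> abs (\sum_(i <- r | P i) F i) < e.
Proof.
move=> e0 h; apply: (big_ind (fun u => abs u < e)) => //; first by rewrite abs0.
by move=> u v; exact: abs_add_lt.
Qed.

Lemma absX x n : abs (x ^+ n) = abs x ^+ n.
Proof. by elim: n => [|n IH]; rewrite ?abs1 // !exprS abs_mul IH. Qed.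

Lemma absV x : abs x^-1 = (abs x)^-1.
Proof.
have [->|nx] := eqVneq x 0; first by rewrite invr0 abs0 invr0.
apply: (mulfI (lt0r_neq0 (abs_gt0 nx))).
by rewrite -abs_mul !mulfV ?abs1 // lt0r_neq0 // abs_gt0.
Qed.

Lemma abs_natr_le1 n : abs n%:R <= 1.
Proof.
elim: n => [|n IH]; first by rewrite abs0.
by rewrite -addn1 natrD; apply: abs_add_le; rewrite ?abs1.
Qed.

Lemma abs_intr_le1 (z : int) : abs z%:~R <= 1.
Proof. by case: z => n; rewrite ?NegzE ?mulrNz ?absN abs_natr_le1. Qed.

Lemma abs_mul_le1 x y : abs x <= 1 -> abs (x * y) <= abs y.
Proof. by move=> hx; rewrite abs_mul ler_piMl. Qed.

Lemma absp_lt1 : abs p%:R < 1.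
Proof. by rewrite (abs_p Ha) invf_lt1 ?ltr1n ?ltr0n ?prime_gt1 ?prime_gt0. Qed.

Lemma natr_neq0 n : (0 < n)%N -> n%:R != 0 :> K.
Proof.
move=> n0; apply/negP => /(natf0_pchar n0) [q hq].
have [qpr q0] := (pcharf_prime hq, pcharf0 hq).
have [eqp | neqp] := eqVneq q p.
  have := abs_p Ha; rewrite -eqp q0 abs0 => /esym/eqP.
  by rewrite invr_eq0 pnatr_eq0 gtn_eqF ?prime_gt0.
have /eqP cop : coprime q p by rewrite prime_coprime // dvdn_prime2.
have [a _] := Bezoutl p (prime_gt0 qpr); rewrite cop => /dvdnP [b hb].
have e1 : 1 = (b * q)%:R - a%:R * p%:R :> K by rewrite -hb natrD natrM; ring.
have : abs 1 < 1.
  rewrite {1}e1 natrM q0 mulr0 sub0r absN abs_mul.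
  by apply: le_lt_trans absp_lt1; rewrite ler_piMl ?abs_natr_le1.
by rewrite abs1 ltxx.
Qed.

Lemma absp_gt0 : 0 < abs p%:R.
Proof. exact/abs_gt0/natr_neq0/prime_gt0. Qed.

Lemma abs_fact_gt0 k : 0 < abs k`!%:R.
Proof. exact/abs_gt0/natr_neq0/fact_gt0. Qed.

Lemma abs_fact_le m n : (m <= n)%N -> abs n`!%:R <= abs m`!%:R.
Proof.
move=> /subnK <-; elim: (n - m)%N => [|k IH] //.
by rewrite addSn factS natrM; apply: le_trans IH; apply: abs_mul_le1; apply: abs_natr_le1.
Qed.

Lemma abs_fact_pmul m : abs (p * m)`!%:R <= abs p%:R ^+ m.
Proof.
elim: m => [|m IH]; first by rewrite muln0 abs1.
have hle : (p <= p * m.+1)%N by rewrite leq_pmulr.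
have hp : abs p`!%:R <= abs p%:R.
  by rewrite -(prednK (prime_gt0 Hp)) factS natrM abs_mul ler_piMr ?abs_natr_le1.
rewrite -(bin_fact hle) mulnS addKn !natrM exprS.
apply: le_trans (abs_mul_le1 _ (abs_natr_le1 _)) _.
by rewrite abs_mul; apply: ler_pM.
Qed.

Lemma absp_expn_lt e : 0 < e -> exists m, abs p%:R ^+ m < e.
Proof.
move=> e0; exists (Num.bound e^-1); set m := Num.bound _.
have hb : e^-1 < m%:R by apply: archi_boundP; rewrite invr_ge0 ltW.
have hpm : (m < p ^ m)%N by apply: ltn_expl; exact: prime_gt1.
rewrite (abs_p Ha) exprVn -natrX -[e]invrK ltf_pV2 ?posrE ?invr_gt0 ?ltr0n ?expn_gt0 ?prime_gt0 //.
by apply: (lt_trans hb); rewrite ltr_nat.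
Qed.

Lemma abs_fact_small M e : 0 <= M -> 0 < e ->
  exists N, forall k, (N <= k)%N -> abs k`!%:R * M < e.
Proof.
move=> M0 e0; have [m hm] := absp_expn_lt (divr_gt0 e0 (ltr_wpDl M0 ltr01)).
exists (p * m)%N => k hk.
have hk' : abs k`!%:R < e / (M + 1).
  exact: le_lt_trans (abs_fact_le hk) (le_lt_trans (abs_fact_pmul m) hm).
move: hk'; rewrite ltr_pdivlMr ?ltr_wpDl //.
by have := abs_nneg k`!%:R; nra.
Qed.

Local Notation Zp := (Zp_set abs).

Lemma Zp_int (z : int) : Zp z%:~R.
Proof. by move=> e e0; exists z; rewrite subrr abs0. Qed.

Lemma Zp_nat n : Zp n%:R.
Proof. exact: (Zp_int n). Qed.

Lemma Zp_le1 x : Zp x -> abs x <= 1.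
Proof.
move=> /(_ 1 ltr01) [z hz]; rewrite -[x](subrK z%:~R).
by apply: abs_add_le; [exact: ltW | exact: abs_intr_le1].
Qed.

Lemma ZpD x y : Zp x -> Zp y -> Zp (x + y).
Proof.
move=> hx hy e e0; have [[z1 h1] [z2 h2]] := (hx e e0, hy e e0).
by exists (z1 + z2); rewrite intrD opprD addrACA; apply: abs_add_lt.
Qed.

Lemma ZpN x : Zp x -> Zp (- x).
Proof.
by move=> hx e e0; have [z h] := hx e e0; exists (- z); rewrite intrN -opprD absN.
Qed.

Lemma ZpB x y : Zp x -> Zp y -> Zp (x - y).
Proof. by move=> hx hy; apply/ZpD/ZpN. Qed.

Lemma Zp_convK (u : nat -> K) l : (forall n, Zp (u n)) -> convK abs u l -> Zp l.
Proof.
move=> hu hc e e0; have [N hN] := hc e e0; have [z hz] := hu N e e0.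
by exists z; apply: (abs_dist_lt _ hz); rewrite abs_distC hN.
Qed.

(* Approximate x by an integer and reduce it modulo p^n. *)
Lemma Zp_approx x n : Zp x ->
  exists2 a : nat, (a < p ^ n)%N & abs (x - a%:R) <= abs p%:R ^+ n.
Proof.
move=> hx; have [z hz] := hx _ (exprn_gt0 n absp_gt0).
set P : int := (p ^ n)%N; have P0 : 0 < P by rewrite ltz_nat expn_gt0 prime_gt0.
have hr : `|(z %% P)%Z|%N = (z %% P)%Z :> int by rewrite gez0_abs ?modz_ge0 ?lt0r_neq0.
exists `|(z %% P)%Z|%N; first by rewrite -ltz_nat hr ltz_pmod.
have -> : x - `|(z %% P)%Z|%N%:R = (x - z%:~R) + (z %/ P)%Z%:~R * p%:R ^+ n.
  have ez : z%:~R = (z %/ P)%Z%:~R * P%:~R + (`|(z %% P)%Z|%N : int)%:~R :> K.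
    by rewrite hr -intrM -intrD -divz_eq.
  by rewrite ez -natrX; ring.
apply: abs_add_le; first exact: ltW.
by rewrite -absX; apply: abs_mul_le1; apply: abs_intr_le1.
Qed.

Definition ffactK x k : K := \prod_(i < k) (x - i%:R).

Lemma binomKE x k : binomK x k = ffactK x k / k`!%:R.
Proof. by []. Qed.

Lemma ffactKS x k : ffactK x k.+1 = ffactK x k * (x - k%:R).
Proof. exact: big_ord_recr. Qed.

Lemma ffactKD x k j : ffactK x (k + j) = ffactK x k * ffactK (x - k%:R) j.
Proof.
elim: j => [|j IH]; first by rewrite addn0 /ffactK big_ord0 mulr1.
by rewrite addnS !ffactKS IH natrD; ring.
Qed.

Lemma ffactK_nat a k : ffactK a%:R k = (a ^_ k)%:R.
Proof.
elim: k => [|k IH]; first by rewrite /ffactK big_ord0 ffactn0.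
rewrite ffactKS IH ffactnSr natrM; case: (leqP k a) => hk; first by rewrite natrB.
by rewrite ffact_small // !mul0r.
Qed.

Lemma fact_binomK x k : k`!%:R * binomK x k = ffactK x k.
Proof. by rewrite binomKE mulrC divfK ?natr_neq0 ?fact_gt0. Qed.

Lemma binomK_nat a k : binomK (a%:R : K) k = 'C(a, k)%:R.
Proof.
apply: (mulfI (natr_neq0 (fact_gt0 k))).
by rewrite fact_binomK ffactK_nat -natrM mulnC -bin_ffact.
Qed.

Lemma abs_ffactK_le1 x k : abs x <= 1 -> abs (ffactK x k) <= 1.
Proof.
move=> hx; elim: k => [|k IH]; first by rewrite /ffactK big_ord0 abs1.
rewrite ffactKS abs_mul mulr_ile1 //.
by apply: abs_add_le; rewrite ?absN ?abs_natr_le1.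
Qed.

Lemma abs_ffactKB x z k : abs x <= 1 -> abs z <= 1 ->
  abs (ffactK x k - ffactK z k) <= abs (x - z).
Proof.
move=> hx hz; elim: k => [|k IH]; first by rewrite /ffactK !big_ord0 subrr abs0.
have -> : ffactK x k.+1 - ffactK z k.+1 =
    (ffactK x k - ffactK z k) * (x - k%:R) + ffactK z k * (x - z).
  by rewrite !ffactKS; ring.
apply: abs_add_le; last exact: abs_mul_le1 (abs_ffactK_le1 _ hz).
rewrite abs_mul; apply: le_trans IH; apply: ler_piMr => //.
by apply: abs_add_le; rewrite ?absN ?abs_natr_le1.
Qed.

Lemma abs_binomKB x z k : abs x <= 1 -> abs z <= 1 ->
  abs (binomK x k - binomK z k) <= abs (x - z) / abs k`!%:R.
Proof.
move=> hx hz; rewrite !binomKE -mulrBl abs_mul absV.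
by rewrite ler_wpM2r ?invr_ge0 ?abs_ffactKB.
Qed.

Lemma abs_binomK_le1 x k : Zp x -> abs (binomK x k) <= 1.
Proof.
move=> hx; have [n hn] := absp_expn_lt (abs_fact_gt0 k).
have [a _ ha] := Zp_approx n hx.
rewrite -[binomK x k](subrK (binomK a%:R k)).
apply: abs_add_le; last by rewrite binomK_nat abs_natr_le1.
apply: le_trans (abs_binomKB k (Zp_le1 hx) (Zp_le1 (Zp_nat a))) _.
by rewrite ler_pdivrMr ?abs_fact_gt0 // mul1r (le_trans ha) ?ltW.
Qed.

Lemma sum_binS (V : nmodType) n (F : nat -> V) :
  \sum_(k < n.+2) F k *+ 'C(n.+1, k) = \sum_(k < n.+1) (F k + F k.+1) *+ 'C(n, k).
Proof.
rewrite big_ord_recl bin0 mulr1n.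
under eq_bigr do rewrite lift0 binS mulrnDr.
under [RHS]eq_bigr do rewrite mulrnDl.
rewrite !big_split /= addrA; congr (_ + _).
by rewrite big_ord_recr /= bin_small // mulr0n addr0 [RHS]big_ord_recl bin0 mulr1n.
Qed.

Lemma ffactK_addr (a b : K) n :
  ffactK (a + b) n = \sum_(k < n.+1) (ffactK a k * ffactK b (n - k)) *+ 'C(n, k).
Proof.
elim: n => [|n IH]; first by rewrite big_ord1 /ffactK !big_ord0 mulr1.
rewrite (sum_binS _ (fun k => ffactK a k * ffactK b (n.+1 - k))) ffactKS IH big_distrl /=.
apply: eq_bigr => k _; have hk : (k <= n)%N by rewrite -ltnS.
by rewrite subSS (subSn hk) !ffactKS natrB //; ring.
Qed.

Lemma binomK_vandermonde (a b : K) n :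
  \sum_(k < n.+1) binomK a k * binomK b (n - k) = binomK (a + b) n.
Proof.
apply: (mulfI (natr_neq0 (fact_gt0 n))).
rewrite fact_binomK ffactK_addr big_distrr /=; apply: eq_bigr => k _.
have hk : (k <= n)%N by rewrite -ltnS.
by rewrite -(bin_fact hk) -(fact_binomK a) -(fact_binomK b) !natrM; ring.
Qed.

Lemma binomK0 n : binomK (0 : K) n = (n == 0)%N%:R.
Proof.
case: n => [|n]; first by rewrite binomKE /ffactK big_ord0 fact0 divr1.
by rewrite binomKE /ffactK big_ord_recl subrr !mul0r.
Qed.

Lemma convK_uniq (u : nat -> K) l1 l2 : convK abs u l1 -> convK abs u l2 -> l1 = l2.
Proof.
move=> h1 h2; apply/eqP/negPn/negP; rewrite -subr_eq0 => /abs_gt0 e0.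
have [[N1 hN1] [N2 hN2]] := (h1 _ e0, h2 _ e0).
have : abs (l1 - l2) < abs (l1 - l2).
  apply: (@abs_dist_lt _ (u (maxn N1 N2))); last by rewrite hN2 ?leq_maxr.
  by rewrite abs_distC hN1 ?leq_maxl.
by rewrite ltxx.
Qed.

Lemma convK_epsilon (u : nat -> K) l :
  convK abs u l -> convK abs u (epsilon (inhabits 0) (convK abs u)).
Proof. by move=> h; apply: epsilon_spec; exists l. Qed.

Lemma convK_tail_bound (s : nat -> K) (B : nat -> R) :
  (forall e, 0 < e -> exists N, B N < e) ->
  (forall m n, (m <= n)%N -> abs (s n - s m) <= B m) ->
  exists2 l, convK abs s l & forall m, abs (l - s m) <= B m.
Proof.
move=> hB hs.
have [l hl] : exists l, convK abs s l.
  apply: (abs_complete Ha) => e e0; have [N hN] := hB e e0; exists N => m n hm hn.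
  apply: (@abs_dist_lt _ (s N)); first exact: le_lt_trans (hs _ _ hm) hN.
  by rewrite abs_distC; exact: le_lt_trans (hs _ _ hn) hN.
exists l => // m; rewrite leNgt; apply/negP => hlt.
have e0 : 0 < abs (l - s m) by apply: le_lt_trans hlt; apply: le_trans (hs m m _).
have [N hN] := hl _ e0.
have : abs (l - s m) < abs (l - s m).
  apply: (@abs_dist_lt _ (s (maxn N m))); first by rewrite abs_distC hN ?leq_maxl.
  by apply: le_lt_trans hlt; rewrite hs ?leq_maxr.
by rewrite ltxx.
Qed.

Definition bounded_by phi M := forall x, Zp x -> abs (phi x) <= M.

Definition S_coef y x k : K := (-1) ^+ k * k`!%:R * binomK y k * binomK x k.

Lemma S_termE y phi x k : S_term y phi x k = S_coef y x k * phi (x - k%:R).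
Proof. by []. Qed.

Lemma abs_S_coef y x k : Zp y -> Zp x -> abs (S_coef y x k) <= abs k`!%:R.
Proof.
move=> hy hx; have [hby hbx] := (abs_binomK_le1 k hy, abs_binomK_le1 k hx).
rewrite /S_coef; move: (binomK y k) (binomK x k) hby hbx => b b' hb hb'.
rewrite !abs_mul absX absN abs1 expr1n mul1r -mulrA.
by apply: ler_piMr => //; apply: mulr_ile1.
Qed.

Lemma abs_S_term y phi M x k : Zp y -> Zp x -> bounded_by phi M ->
  abs (S_term y phi x k) <= abs k`!%:R * M.
Proof.
move=> hy hx hM; rewrite S_termE abs_mul.
by apply: ler_pM => //; [exact: abs_S_coef | apply/hM/ZpB/Zp_nat].
Qed.

Lemma abs_S_partialB y phi M x m n : Zp y -> Zp x -> bounded_by phi M -> 0 <= M ->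
  (m <= n)%N -> abs (S_partial y phi x n - S_partial y phi x m) <= abs m`!%:R * M.
Proof.
move=> hy hx hM M0 hmn; rewrite /S_partial -!(big_mkord xpredT).
rewrite (big_cat_nat (leq0n m) hmn) /= addrAC subrr add0r big_nat_cond.
apply: abs_sum_le => [|k /andP [/andP [hk _] _]]; first exact: mulr_ge0.
apply: le_trans (abs_S_term _ hy hx hM) _.
by rewrite ler_wpM2r ?abs_fact_le.
Qed.

Lemma S_op_spec y phi M x : Zp y -> Zp x -> bounded_by phi M -> 0 <= M ->
  convK abs (S_partial y phi x) (S_op abs y phi x) /\
  forall m, abs (S_op abs y phi x - S_partial y phi x m) <= abs m`!%:R * M.
Proof.
move=> hy hx hM M0.
have hB e : 0 < e -> exists N, abs N`!%:R * M < e.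
  by move=> e0; have [N hN] := abs_fact_small M0 e0; exists N; apply: hN.
have [l hl hb] := convK_tail_bound hB (fun m n => abs_S_partialB hy hx hM M0).
by rewrite /S_op -(convK_uniq hl (convK_epsilon hl)).
Qed.

Lemma abs_S_op_le y phi M x : Zp y -> Zp x -> bounded_by phi M -> 0 <= M ->
  abs (S_op abs y phi x) <= M.
Proof.
move=> hy hx hM M0; have [_ /(_ 0%N)] := S_op_spec hy hx hM M0.
by rewrite /S_partial big_ord0 subr0 abs1 mul1r.
Qed.

Lemma exists_ub_ltn (N : nat) (Q : nat -> R -> Prop) :
  (forall k M M', M <= M' -> Q k M -> Q k M') ->
  (forall k, (k < N)%N -> exists M, Q k M) -> exists M, forall k, (k < N)%N -> Q k M.
Proof.
move=> hmono; elim: N => [|N IH] h; first by exists 0.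
have [M1 h1] := IH (fun k hk => h k (ltnW hk)); have [M2 h2] := h N (ltnSn N).
exists (Num.max M1 M2) => k; rewrite ltnS leq_eqVlt => /predU1P [-> | hk].
  by apply: hmono h2; rewrite le_max lexx orbT.
by apply: hmono (h1 k hk); rewrite le_max lexx.
Qed.

Definition unbounded_near phi c n :=
  forall M, exists x, [/\ Zp x, abs (x - c) <= abs p%:R ^+ n & M < abs (phi x)].

(* The ball of radius |p|^n is covered by the p^(n+1) balls of radius |p|^(n+1) around the
   integers a < p^(n+1); phi is unbounded on one of them. *)
Lemma unbounded_near_split phi c n : unbounded_near phi c n ->
  exists c', [/\ Zp c', abs (c' - c) <= abs p%:R ^+ n & unbounded_near phi c' n.+1].
Proof.
move=> hb; apply: NNPP => hno.
have hQ a : (a < p ^ n.+1)%N -> exists M, abs (a%:R - c) <= abs p%:R ^+ n ->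
    forall x, Zp x -> abs (x - a%:R) <= abs p%:R ^+ n.+1 -> abs (phi x) <= M.
  move=> _; have [hac|hac] := classic (abs (a%:R - c) <= abs p%:R ^+ n); last by exists 0.
  have /not_all_ex_not [M hM] : ~ unbounded_near phi a%:R n.+1.
    by move=> hb'; apply: hno; exists a%:R; split => //; exact: Zp_nat.
  exists M => _ x hx hxa; rewrite leNgt; apply/negP => hlt.
  by apply: hM; exists x; split.
have [M hM] := exists_ub_ltn (fun a M M' hMM' h hac x hx hxa => le_trans (h hac x hx hxa) hMM') hQ.
have [x [hx hxc hMx]] := hb M; have [a ha hxa] := Zp_approx n.+1 hx.
have hxa' : abs (x - a%:R) <= abs p%:R ^+ n.
  by apply: le_trans hxa _; rewrite ler_wiXn2l ?(ltW absp_lt1).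
have hac : abs (a%:R - c) <= abs p%:R ^+ n by apply: (abs_dist_le _ hxc); rewrite abs_distC.
by move: (hM a ha hac x hx hxa); rewrite leNgt hMx.
Qed.

Lemma unbounded_near_accumulation phi : unbounded_near phi 0 0 ->
  exists2 L, Zp L & forall m, unbounded_near phi L m.
Proof.
move=> h0.
pose next nc c' := unbounded_near phi nc.2 nc.1 ->
  [/\ Zp c', abs (c' - nc.2) <= abs p%:R ^+ nc.1 & unbounded_near phi c' nc.1.+1].
have [f hf] : exists f : nat * K -> K, forall nc, next nc (f nc).
  apply: choice => nc.
  have [hb|hb] := classic (unbounded_near phi nc.2 nc.1); last by exists 0.
  by have [c' hc'] := unbounded_near_split hb; exists c'.
pose c := fix c n := if n is m.+1 then f (m, c m) else 0.
have hc n : [/\ Zp (c n), unbounded_near phi (c n) n & abs (c n.+1 - c n) <= abs p%:R ^+ n].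
  elim: n => [|n [_ hb _]]; first by have [] := hf (0%N, 0) h0; split => //; exact: (Zp_nat 0).
  by have [hz _ hb'] := hf (n, c n) hb; have [] := hf (n.+1, c n.+1) hb'.
have htail m n : (m <= n)%N -> abs (c n - c m) <= abs p%:R ^+ m.
  move=> /subnK <-; elim: (n - m)%N => [|k IH]; first by rewrite subrr abs0 exprn_ge0.
  have [_ _ hk] := hc (k + m)%N; apply: abs_dist_le IH.
  by apply: le_trans hk _; rewrite ler_wiXn2l ?(ltW absp_lt1) ?leq_addl.
have [L hL hLc] := convK_tail_bound (@absp_expn_lt) htail.
exists L; first by apply: Zp_convK hL => n; have [] := hc n.
move=> m M; have [_ hb _] := hc m; have [x [hx hxc hMx]] := hb M.
by exists x; split => //; apply: abs_dist_le hxc _; rewrite abs_distC.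
Qed.

Lemma cont_Zp_bounded phi : cont_Zp abs phi -> exists2 M, 0 <= M & bounded_by phi M.
Proof.
move=> hc; apply: NNPP => hno.
have h0 : unbounded_near phi 0 0.
  move=> M; apply: NNPP => hM; apply: hno; exists (Num.max M 0); first by rewrite le_max lexx orbT.
  move=> x hx; rewrite le_max leNgt; apply/orP; left; apply/negP => hlt.
  by apply: hM; exists x; split; rewrite ?subr0 ?Zp_le1.
have [L hL hLb] := unbounded_near_accumulation h0.
have [d d0 hd] := hc L hL 1 ltr01; have [m hm] := absp_expn_lt d0.
have [x [hx hxL hMx]] := hLb m (abs (phi L) + 1).
have hxL' := hd x hx (le_lt_trans hxL hm); rewrite -[phi x](subrK (phi L)) in hMx.
have := abs_ultra Ha (phi x - phi L) (phi L); rewrite le_max => /orP [] h.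
  by have := abs_nneg (phi L); lra.
lra.
Qed.

Lemma cont_Zp_cst c : cont_Zp abs (fun _ => c).
Proof. by move=> x _ e e0; exists 1 => // x' _ _; rewrite subrr abs0. Qed.

Lemma cont_ZpD f g : cont_Zp abs f -> cont_Zp abs g -> cont_Zp abs (fun x => f x + g x).
Proof.
move=> hf hg x hx e e0; have [[d1 d10 h1] [d2 d20 h2]] := (hf x hx e e0, hg x hx e e0).
exists (Num.min d1 d2) => [|x' hx']; first by rewrite lt_min d10 d20.
rewrite lt_min => /andP [hd1 hd2]; rewrite opprD addrACA.
by apply: abs_add_lt; [apply: h1 | apply: h2].
Qed.

Lemma cont_ZpM f g : cont_Zp abs f -> cont_Zp abs g -> cont_Zp abs (fun x => f x * g x).
Proof.
move=> hf hg x hx e e0.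
have [[Mf Mf0 hMf] [Mg Mg0 hMg]] := (cont_Zp_bounded hf, cont_Zp_bounded hg).
set M := Num.max Mf Mg; have M0 : 0 <= M by rewrite le_max Mf0.
have e'0 : 0 < e / (M + 1) by rewrite divr_gt0 ?ltr_wpDl.
have [[d1 d10 h1] [d2 d20 h2]] := (hf x hx _ e'0, hg x hx _ e'0).
have small u v : abs u <= M -> abs v < e / (M + 1) -> abs (u * v) < e.
  move=> hu; rewrite abs_mul ltr_pdivlMr ?ltr_wpDl // => hv.
  by have := abs_nneg v; nra.
exists (Num.min d1 d2) => [|x' hx']; first by rewrite lt_min d10 d20.
rewrite lt_min => /andP [hd1 hd2].
have -> : f x' * g x' - f x * g x = f x' * (g x' - g x) + g x * (f x' - f x) by ring.
apply: abs_add_lt; apply: small; rewrite ?h1 ?h2 //; apply: le_trans (_ : _ <= M).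
- by apply: hMf.
- by rewrite le_max lexx.
- by apply: hMg.
- by rewrite le_max lexx orbT.
Qed.

Lemma cont_Zp_shift phi k : cont_Zp abs phi -> cont_Zp abs (fun x => phi (x - k%:R)).
Proof.
move=> hc x hx e e0; have [d d0 hd] := hc _ (ZpB hx (Zp_nat k)) e e0.
exists d => // x' hx' hxd; apply: hd; first exact: ZpB hx' (Zp_nat k).
by rewrite opprB addrA subrK.
Qed.

Lemma cont_Zp_binomK k : cont_Zp abs (fun x => binomK x k).
Proof.
move=> x hx e e0; exists (e * abs k`!%:R) => [|x' hx' hxd]; first by rewrite mulr_gt0 ?abs_fact_gt0.
apply: le_lt_trans (abs_binomKB k (Zp_le1 hx') (Zp_le1 hx)) _.
by rewrite ltr_pdivrMr ?abs_fact_gt0.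
Qed.

Lemma cont_Zp_S_partial y phi n : cont_Zp abs phi -> cont_Zp abs (fun x => S_partial y phi x n).
Proof.
move=> hc; elim: n => [|n IH].
  by under [fun x => _]funext do rewrite /S_partial big_ord0; exact: cont_Zp_cst.
rewrite /S_partial; under [fun x => _]funext do rewrite big_ord_recr.
apply: cont_ZpD IH _; apply: cont_ZpM (cont_Zp_shift _ hc).
exact: cont_ZpM (cont_Zp_cst _) (cont_Zp_binomK _).
Qed.

Lemma cont_Zp_uniform_limit f (g : nat -> K -> K) : (forall n, cont_Zp abs (g n)) ->
  (forall e, 0 < e -> exists n, forall x, Zp x -> abs (f x - g n x) < e) -> cont_Zp abs f.
Proof.
move=> hg hfg x hx e e0; have [n hn] := hfg e e0; have [d d0 hd] := hg n x hx e e0.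
exists d => // x' hx' hxd; rewrite -[f x' - f x](subrKA (g n x')) -[_ - f x](subrKA (g n x)).
apply: abs_add_lt; first exact: hn.
by apply: abs_add_lt; [apply: hd | rewrite abs_distC; apply: hn].
Qed.

Lemma cont_Zp_S_op y phi : Zp y -> cont_Zp abs phi -> cont_Zp abs (S_op abs y phi).
Proof.
move=> hy hc; have [M M0 hM] := cont_Zp_bounded hc.
apply: (cont_Zp_uniform_limit (fun n => @cont_Zp_S_partial y phi n hc)) => e e0.
have [N hN] := abs_fact_small M0 e0; exists N => x hx.
by have [_ /(_ N) hb] := S_op_spec hy hx hM M0; apply: le_lt_trans hb (hN N _).
Qed.

Lemma sum_triangle (a : nat -> K) (b : nat -> nat -> K) N :
  \sum_(k < N) a k * \sum_(j < (N - k)%N) b k j = \sum_(n < N) \sum_(k < n.+1) a k * b k (n - k)%N.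
Proof.
elim: N => [|N IH]; first by rewrite !big_ord0.
rewrite [RHS]big_ord_recr /= -IH.
under eq_bigr => k _ do rewrite (subSn (ltnSE (ltn_ord k))) big_ord_recr /= mulrDr.
by rewrite big_split /= big_ord_recr /= subnn big_ord0 mulr0 addr0.
Qed.

Lemma S_coefN_diagonal y phi x n :
  \sum_(k < n.+1) S_coef (- y) x k * S_term y phi (x - k%:R) (n - k)%N = (n == 0)%N%:R * phi x.
Proof.
set C := (-1) ^+ n * ffactK x n * phi (x - n%:R).
have term k : (k <= n)%N -> S_coef (- y) x k * S_term y phi (x - k%:R) (n - k)%N =
    C * (binomK (- y) k * binomK y (n - k)%N).
  move=> hk; have hx : x - k%:R - (n - k)%N%:R = x - n%:R by rewrite natrB //; ring.
  rewrite /C -(subnKC hk) ffactKD exprD subnKC // S_termE hx /S_coef.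
  by rewrite -(fact_binomK x) -(fact_binomK (x - k%:R)); ring.
under eq_bigr => k _ do rewrite term -1?ltnS //.
rewrite -big_distrr /= binomK_vandermonde addNr binomK0 /C.
by case: n {C term} => [|n]; rewrite ?mulr0 ?mul0r // expr0 /ffactK big_ord0 subr0 !mul1r mulr1.
Qed.

Lemma S_partial_inverse y phi x n : (0 < n)%N ->
  \sum_(k < n) S_coef (- y) x k * S_partial y phi (x - k%:R) (n - k)%N = phi x.
Proof.
move=> n0; rewrite /S_partial (sum_triangle (S_coef (- y) x) (fun k => S_term y phi (x - k%:R))).
under eq_bigr do rewrite S_coefN_diagonal.
by case: n n0 => // n _; rewrite big_ord_recl mul1r big1 ?addr0 // => i _; rewrite mul0r.
Qed.

Lemma S_opNK y phi : Zp y -> cont_Zp abs phi ->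
  forall x, Zp x -> S_op abs (- y) (S_op abs y phi) x = phi x.
Proof.
move=> hy hc x hx; have [M M0 hM] := cont_Zp_bounded hc.
have hS : bounded_by (S_op abs y phi) M by move=> z hz; apply: abs_S_op_le.
have [hconv _] := S_op_spec (ZpN hy) hx hS M0.
apply: (convK_uniq hconv) => e e0; have [N hN] := abs_fact_small M0 e0.
exists (N + N).+1 => n hn.
rewrite -(S_partial_inverse y phi x (leq_ltn_trans (leq0n _) hn)) /S_partial -sumrB.
apply: abs_sum_lt => // k _; rewrite -mulrBr abs_mul.
have [_ /(_ (n - k)%N) htail] := S_op_spec hy (ZpB hx (Zp_nat k)) hM M0.
have hfact : abs k`!%:R * abs (n - k)`!%:R <= abs N`!%:R.
  have [hkN|hkN] := leqP N k.
    by apply: le_trans (abs_fact_le hkN); apply: ler_piMr; rewrite ?abs_natr_le1.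
  have hNk : (N <= n - k)%N by lia.
  by apply: le_trans (abs_fact_le hNk); apply: ler_piMl; rewrite ?abs_natr_le1.
apply: le_lt_trans (hN N (leqnn N)).
apply: le_trans (ler_pM _ _ (abs_S_coef k (ZpN hy) hx) htail) _ => //.
by rewrite mulrA ler_wpM2r.
Qed.

Lemma convK_linear a (u v : nat -> K) l1 l2 : convK abs u l1 -> convK abs v l2 ->
  convK abs (fun n => a * u n + v n) (a * l1 + l2).
Proof.
move=> h1 h2 e e0; have ea : 0 < e / (abs a + 1) by rewrite divr_gt0 ?ltr_wpDl.
have [[N1 hN1] [N2 hN2]] := (h1 _ ea, h2 _ e0).
exists (maxn N1 N2) => n; rewrite geq_max => /andP [hn1 hn2].
rewrite opprD addrACA -mulrBr; apply: abs_add_lt; last exact: hN2.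
move: (hN1 n hn1); rewrite abs_mul ltr_pdivlMr ?ltr_wpDl // => h.
by have := abs_nneg a; have := abs_nneg (u n - l1); nra.
Qed.

Lemma S_op_linear y a phi psi x : Zp y -> Zp x -> cont_Zp abs phi -> cont_Zp abs psi ->
  S_op abs y (fun t => a * phi t + psi t) x = a * S_op abs y phi x + S_op abs y psi x.
Proof.
move=> hy hx hc1 hc2.
have [[M1 M10 hM1] [M2 M20 hM2]] := (cont_Zp_bounded hc1, cont_Zp_bounded hc2).
have [[c1 _] [c2 _]] := (S_op_spec hy hx hM1 M10, S_op_spec hy hx hM2 M20).
have hl := convK_linear a c1 c2.
have eS : S_partial y (fun t => a * phi t + psi t) x =
    (fun n => a * S_partial y phi x n + S_partial y psi x n).
  apply: funext => n; rewrite /S_partial big_distrr -big_split /=.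
  by apply: eq_bigr => k _; rewrite /S_term; ring.
by rewrite /S_op eS; apply/esym/(convK_uniq hl)/(convK_epsilon hl).
Qed.

Lemma supnorm_ub phi M : bounded_by phi M -> bounded_by phi (supnorm abs phi).
Proof.
move=> hM x hx; apply: ub_le_sup; last by exists x.
by exists M => _ [z hz <-]; apply: hM.
Qed.

Lemma supnorm_le phi M : bounded_by phi M -> supnorm abs phi <= M.
Proof.
move=> hM; apply: ge_sup; first by exists (abs (phi 0)), 0 => //; exact: (Zp_nat 0).
by move=> _ [x hx <-]; apply: hM.
Qed.

Lemma supnorm_ge0 phi M : bounded_by phi M -> 0 <= supnorm abs phi.
Proof. by move=> /supnorm_ub /(_ 0 (Zp_nat 0)); apply: le_trans. Qed.

Lemma S_op_supnorm y phi : Zp y -> cont_Zp abs phi ->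
  supnorm abs (S_op abs y phi) = supnorm abs phi.
Proof.
move=> hy hc; have [M M0 hM] := cont_Zp_bounded hc.
have hS : bounded_by (S_op abs y phi) (supnorm abs phi).
  by move=> x hx; apply: abs_S_op_le (supnorm_ub hM) (supnorm_ge0 hM).
apply: le_anti; rewrite supnorm_le //=.
apply: supnorm_le => x hx; rewrite -(S_opNK hy hc hx).
by apply: abs_S_op_le (ZpN hy) hx (supnorm_ub hS) (supnorm_ge0 hS).
Qed.

End Padic.

Theorem corollary6p4 (p : nat) (R : realType) (K : closedFieldType) (abs : K -> R) :
  prime p -> padic_abs abs p ->
  forall y : K, Zp_set abs y ->
  (forall phi : K -> K, cont_Zp abs phi ->
     [/\ forall x, Zp_set abs x -> convK abs (S_partial y phi x) (S_op abs y phi x),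
         cont_Zp abs (S_op abs y phi),
         supnorm abs (S_op abs y phi) = supnorm abs phi,
         forall x, Zp_set abs x -> S_op abs (- y) (S_op abs y phi) x = phi x &
         forall x, Zp_set abs x -> S_op abs y (S_op abs (- y) phi) x = phi x]) /\
  (forall (a : K) (phi psi : K -> K), cont_Zp abs phi -> cont_Zp abs psi ->
     forall x, Zp_set abs x ->
       S_op abs y (fun t => a * phi t + psi t) x = a * S_op abs y phi x + S_op abs y psi x).
Proof.
move=> hp ha y hy; split=> [phi hc | a phi psi hc1 hc2 x hx]; last first.
  exact: (S_op_linear (K := K) hp ha a hy hx hc1 hc2).
have [M M0 hM] := cont_Zp_bounded (K := K) hp ha hc.
split.
- by move=> x hx; have [] := S_op_spec hp ha hy hx hM M0.
- exact: (cont_Zp_S_op (K := K) hp ha hy hc).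
- exact: (S_op_supnorm (K := K) hp ha hy hc).
- exact: (S_opNK (K := K) hp ha hy hc).
- by move=> x hx; rewrite -{1}(opprK y); apply: (S_opNK (K := K) hp ha (ZpN ha hy) hc hx).
Qed.
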